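(* Let $V$ be a finite nonempty set, let $d \ge 1$ be an integer, and let $R = (\le_1, \ldots, \le_d)$ be a $d$-representation on $V$. Then the supremum section $\Sigma(R)$ is collapsible.
   Context: A $d$-representation on $V$ is a family of $d$ linear orders $\le_1,\ldots,\le_d$ on $V$. For a linear order $\le$ on $V$, $x\in V$ and $F\subseteq V$, $x$ dominates $F$ in $\le$ if $f\le x$ for every $f\in F$; $x$ dominates $F$ in $R$ if $x$ dominates $F$ in some $\le_i$. The supremum section $\Sigma(R)$ is the set of all subsets $F\subseteq V$ such that every $v\in V$ dominates $F$ in $R$ (in particular $\emptyset\in\Sigma(R)$); it is an abstract simplicial complex (a family of subsets of $V$ closed under taking subsets), whose elements are called faces and whose inclusion-maximal faces are called facets. A face $F$ of a simplicial complex $\Delta$ is free if it is nonempty, not maximal, and contained in exactly one facet of $\Delta$. $\Delta$ collapses to $\Gamma$ if there are simplicial complexes $\Delta_1=\Delta,\Delta_2,\ldots,\Delta_k=\Gamma$ and, for each $i\le k-1$, a free face $F_i$ of $\Delta_i$ with $\Delta_{i+1}=\Delta_i\setminus\{F\in\Delta_i : F_i\subseteq F\}$. $\Delta$ is collapsible if it collapses to a point, i.e. to a complex of the form $\{\emptyset,\{v\}\}$. *)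

From mathcomp Require Import all_boot.
Set Implicit Arguments. Unset Strict Implicit. Unset Printing Implicit Defensive.

Definition linear_order (V : finType) (le : rel V) : Prop :=
  [/\ reflexive le, antisymmetric le, transitive le & total le].

Definition d_representation (V : finType) (d : nat) (R : 'I_d -> rel V) : Prop :=
  forall i, linear_order (R i).

Definition dominates (V : finType) (le : rel V) (x : V) (F : {set V}) : bool :=
  [forall f in F, le f x].

Definition dominatesR (V : finType) (d : nat) (R : 'I_d -> rel V) (x : V)
  (F : {set V}) : bool :=
  [exists i : 'I_d, dominates (R i) x F].

Definition supremum_section (V : finType) (d : nat) (R : 'I_d -> rel V)
  : {set {set V}} :=
  [set F : {set V} | [forall v : V, dominatesR R v F]].

Definition is_facet (V : finType) (D : {set {set V}}) (F : {set V}) : bool :=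
  (F \in D) && [forall G in D, (F \subset G) ==> (G == F)].

Definition free_face (V : finType) (D : {set {set V}}) (F : {set V}) : bool :=
  [&& F \in D, F != set0, ~~ is_facet D F &
      #|[set G in D | is_facet D G && (F \subset G)]| == 1].

Definition remove_star (V : finType) (D : {set {set V}}) (F : {set V})
  : {set {set V}} :=
  D :\: [set G in D | F \subset G].

Inductive collapses (V : finType) : {set {set V}} -> {set {set V}} -> Prop :=
  | collapses_refl D : collapses D D
  | collapses_step D F G :
      free_face D F -> collapses (remove_star D F) G -> collapses D G.

Definition collapsible (V : finType) (D : {set {set V}}) : Prop :=
  exists v : V, collapses D [set set0; [set v]].

From mathcomp Require Import all_boot.
Set Implicit Arguments. Unset Strict Implicit. Unset Printing Implicit Defensive.

(* Generalise the supremum section to the complex of faces G of W such that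
   every v in W dominates G :|: B in one of the orders indexed by J, and induct
   on #|J| + #|W|.  Let x be the maximum of W in an order j0 of J.  If x does
   not dominate B in j0, no vertex of W does, and j0 can be dropped.  Otherwise
   x dominates G :|: B in j0 for every G in W, so the complex is its deletion
   at x (the same complex on W :\ x) with the cone from x over its link
   attached, and the link is the complex for J :\ j0, W :\ x and x |: B.
   A collapse of the link to a point [set y] lifts to the cone, since x |: F is
   free exactly when F is free in the link; then the free face [set x] goes,
   leaving the deletion, which is collapsible by induction. *)

Lemma collapses_trans (V : finType) (A B C : {set {set V}}) :
  collapses A B -> collapses B C -> collapses A C.
Proof. by elim=> // D F G hF _ IH /IH; apply: collapses_step. Qed.

Lemma collapses_subset (V : finType) (A B : {set {set V}}) :
  collapses A B -> B \subset A.
Proof. by elim=> // D F G _ _ /subset_trans; apply; apply: subsetDl. Qed.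

Section AttachCone.
Variable V : finType.
Implicit Types (x y : V) (F G H : {set V}) (L N : {set {set V}}).

Definition attach_cone x L N : {set {set V}} :=
  [set H : {set V} | if x \in H then H :\ x \in L else H \in N].

Lemma in_attach_cone x L N H :
  (H \in attach_cone x L N) = (if x \in H then H :\ x \in L else H \in N).
Proof. by rewrite inE. Qed.

Lemma setU1_in_attach_cone x L N G : x \notin G ->
  (x |: G \in attach_cone x L N) = (G \in L).
Proof. by move=> xG; rewrite in_attach_cone setU11 setU1K. Qed.

Lemma notin_cover x L G : x \notin cover L -> G \in L -> x \notin G.
Proof. by move=> xL GL; apply: contra xL => xG; apply/bigcupP; exists G. Qed.

Lemma cover_subset L L' : L' \subset L -> cover L' \subset cover L.
Proof.
by move=> sL'L; apply/bigcupsP => K KL'; apply: bigcup_max (subsetP sL'L K KL') _.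
Qed.

Lemma attach_cone0 x N : x \notin cover N -> attach_cone x set0 N = N.
Proof.
move=> xN; apply/setP=> H; rewrite in_attach_cone inE.
by case: ifPn => // xH; apply/esym/negbTE; apply: contraL xH; apply: notin_cover.
Qed.

Section Link.
Variables (x : V) (L N : {set {set V}}).
Hypothesis xL : x \notin cover L.

Lemma is_facet_attach_cone G : x \notin G ->
  is_facet (attach_cone x L N) (x |: G) = is_facet L G.
Proof.
move=> xG; rewrite /is_facet setU1_in_attach_cone //.
apply/andP/andP => -[GL /forall_inP maxG]; split=> //; apply/forall_inP => K.
- move=> KL; have xK := notin_cover xL KL; apply/implyP => GK.
  have := maxG (x |: K); rewrite setU1_in_attach_cone // setUS // KL implyTb.
  by move=> /(_ isT) /eqP e; rewrite -(setU1K xG) -e setU1K.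
- rewrite in_attach_cone; case: ifPn => [xK KxL|xK _]; apply/implyP => GK.
    have GKx : G \subset K :\ x.
      by rewrite subsetD1 xG andbT (subset_trans _ GK) ?subsetUr.
    by have /implyP/(_ GKx)/eqP <- := maxG _ KxL; rewrite setD1K.
  by have := subsetP GK x (setU11 x G); rewrite (negPf xK).
Qed.

Lemma facets_attach_cone F : x \notin F ->
  [set H in attach_cone x L N |
     is_facet (attach_cone x L N) H && (x |: F \subset H)] =
  [set x |: G | G in [set G in L | is_facet L G && (F \subset G)]].
Proof.
move=> xF; apply/setP=> H; rewrite inE; apply/andP/imsetP => [[_ /andP[fH FH]]|].
  have xH : x \in H by apply: (subsetP FH); rewrite setU11.
  have xHx : x \notin H :\ x by rewrite setD11.
  exists (H :\ x); last by rewrite setD1K.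
  have fHx : is_facet L (H :\ x) by rewrite -(is_facet_attach_cone xHx) setD1K.
  rewrite inE fHx; case/andP: fHx => -> _ /=.
  by rewrite subsetD1 xF andbT (subset_trans _ FH) ?subsetUr.
case=> G; rewrite inE => /andP[GL /andP[fG FG]] ->.
have xG := notin_cover xL GL.
by rewrite setU1_in_attach_cone // is_facet_attach_cone // GL fG setUS.
Qed.

Lemma free_face_attach_cone F : F \in L -> ~~ is_facet L F ->
  #|[set G in L | is_facet L G && (F \subset G)]| = 1 ->
  free_face (attach_cone x L N) (x |: F).
Proof.
move=> FL nfF oneF; have xF := notin_cover xL FL.
apply/and4P; split.
- by rewrite setU1_in_attach_cone.
- by apply/set0Pn; exists x; rewrite setU11.
- by rewrite is_facet_attach_cone.
rewrite facets_attach_cone // card_in_imset ?oneF //.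
move=> G1 G2; rewrite !inE => /andP[/(notin_cover xL) xG1 _].
by case/andP=> /(notin_cover xL) xG2 _ e; rewrite -(setU1K xG1) e setU1K.
Qed.
End Link.

Lemma remove_star_attach_cone x L N F : x \notin F ->
  remove_star (attach_cone x L N) (x |: F) = attach_cone x (remove_star L F) N.
Proof.
move=> xF; apply/setP=> H.
rewrite /remove_star !(inE, in_attach_cone) subUset sub1set.
case: ifPn => [xH|xH]; last by rewrite andbF.
by rewrite subsetD1 xF andbT andbC.
Qed.

Lemma collapses_attach_cone x N L L' : x \notin cover L -> collapses L L' ->
  collapses (attach_cone x L N) (attach_cone x L' N).
Proof.
move=> + LL'; elim: LL' => [D|D F G hF _ IH] xD; first exact: collapses_refl.
case/and4P: hF => FD _ nfF /eqP oneF.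
apply: collapses_step (free_face_attach_cone N xD FD nfF oneF) _.
rewrite remove_star_attach_cone ?(notin_cover xD FD) //; apply: IH.
by apply: contra xD; apply: (subsetP (cover_subset (subsetDl _ _))).
Qed.

Lemma is_facet_point y G : is_facet [set set0; [set y]] G = (G == [set y]).
Proof.
have y0 : [set y] != set0 by apply/set0Pn; exists y; rewrite set11.
rewrite /is_facet !inE; have [->|_] /= := eqVneq G set0.
  rewrite eq_sym (negPf y0); apply/negbTE/forall_inP => /(_ [set y]).
  by rewrite !inE eqxx orbT sub0set (negPf y0) => /(_ isT).
have [->|//] := eqVneq G [set y]; apply/forall_inP => K; rewrite !inE.
by case/orP=> /eqP ->; rewrite ?eqxx ?implybT // sub1set inE.
Qed.

Lemma collapses_attach_cone_point x y N : y != x -> x \notin cover N ->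
  collapses (attach_cone x [set set0; [set y]] N) N.
Proof.
move=> yx xN; set P := [set set0; [set y]].
have xP : x \notin cover P.
  apply/bigcupP => -[K]; rewrite !inE => /orP[] /eqP -> /[!inE] // /eqP xy.
  by rewrite xy eqxx in yx.
have P0 : set0 \in P by rewrite !inE eqxx.
have nfP0 : ~~ is_facet P set0.
  by rewrite is_facet_point eq_sym; apply/set0Pn; exists y; rewrite set11.
have oneP0 : #|[set G in P | is_facet P G && (set0 \subset G)]| = 1.
  rewrite -(cards1 [set y]); apply: eq_card => G.
  rewrite !inE is_facet_point sub0set andbT.
  by case: (G =P [set y]); rewrite ?andbF ?orbT.
apply: collapses_step (free_face_attach_cone N xP P0 nfP0 oneP0) _.
rewrite remove_star_attach_cone ?inE //.
have -> : remove_star P set0 = set0.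
  by apply/setP => G; rewrite /remove_star !inE sub0set andbT andNb.
by rewrite attach_cone0 //; apply: collapses_refl.
Qed.

Lemma collapsible_attach_cone x L N : x \notin cover L -> x \notin cover N ->
  collapsible N -> L = set0 \/ collapsible L -> collapsible (attach_cone x L N).
Proof.
move=> xL xN [z Nz] [->|[y Ly]]; first by rewrite attach_cone0 //; exists z.
have yx : y != x.
  apply: contraNneq xL => <-; apply/bigcupP; exists [set y]; last exact: set11.
  by apply: (subsetP (collapses_subset Ly)); rewrite !inE eqxx orbT.
exists z; apply: collapses_trans (collapses_attach_cone N xL Ly) _.
exact: collapses_trans (collapses_attach_cone_point yx xN) Nz.
Qed.
End AttachCone.

Lemma dominatesE (V : finType) (le : rel V) x F :
  dominates le x F = (F \subset [set f | le f x]).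
Proof. by apply/forall_inP/subsetP => h f /h; rewrite ?inE. Qed.

Lemma dominatesU (V : finType) (le : rel V) x F G :
  dominates le x (F :|: G) = dominates le x F && dominates le x G.
Proof. by rewrite !dominatesE subUset. Qed.

Lemma exists_linear_max (V : finType) (le : rel V) (A : {set V}) :
  linear_order le -> A != set0 ->
  exists2 x, x \in A & forall v, v \in A -> le v x.
Proof.
case=> le_refl _ le_trans le_total /set0Pn[a aA].
set ge := fun x y => le y x.
have ge_total : total ge by move=> x y; apply: le_total.
have := sort_sorted ge_total (enum A); have memS := mem_sort ge (enum A).
case: (sort ge _) memS => [|x s] memS.
  by have := memS a; rewrite mem_enum aA.
move=> /(order_path_min (rev_trans le_trans))/allP xmax.
exists x; first by rewrite -mem_enum -memS mem_head.
by move=> v; rewrite -mem_enum -memS inE => /predU1P[->|/xmax].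
Qed.

Section RelativeSection.
Variables (V : finType) (d : nat) (R : 'I_d -> rel V).
Implicit Types (J : {set 'I_d}) (W B G : {set V}) (x : V).

Definition relative_section J W B : {set {set V}} :=
  [set G : {set V} | (G \subset W) &&
     [forall v in W, [exists j in J, dominates (R j) v (G :|: B)]]].

Lemma relative_sectionP J W B G :
  reflect (G \subset W /\
           forall v, v \in W -> exists2 j, j \in J & dominates (R j) v (G :|: B))
          (G \in relative_section J W B).
Proof.
rewrite inE; apply: (iffP andP) => -[GW domG]; split=> //.
  by move=> v /(forall_inP domG)/exists_inP[j]; exists j.
by apply/forall_inP => v /domG[j jJ domj]; apply/exists_inP; exists j.
Qed.

Lemma supremum_section_relative :
  supremum_section R = relative_section setT setT set0.
Proof.
apply/setP => G; rewrite !inE subsetT setU0; apply: eq_forallb => v.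
by rewrite in_setT; apply: eq_existsb => j; rewrite in_setT.
Qed.

Lemma cover_relative_section J W B : cover (relative_section J W B) \subset W.
Proof. by apply/bigcupsP => G /relative_sectionP[]. Qed.

Lemma relative_section_eq0 J W B :
  set0 \notin relative_section J W B -> relative_section J W B = set0.
Proof.
move=> S0; apply/setP => G; rewrite in_set0.
apply/negP => /relative_sectionP[_ domG]; apply: (negP S0).
apply/relative_sectionP; split=> [|v /domG[j jJ]]; first exact: sub0set.
by rewrite dominatesU set0U => /andP[_ domB]; exists j.
Qed.

Lemma relative_section_drop J W B (j0 : 'I_d) :
  (forall v, v \in W -> ~~ dominates (R j0) v B) ->
  relative_section J W B = relative_section (J :\ j0) W B.
Proof.
move=> nodom; apply/setP => G.
apply/relative_sectionP/relative_sectionP => -[GW domG]; split=> // v vW;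
  have [j jJ domj] := domG v vW; exists j => //.
  rewrite in_setD1 jJ andbT; apply: contraTneq domj => ->.
  by rewrite dominatesU negb_and nodom ?orbT.
by move: jJ; rewrite in_setD1 => /andP[].
Qed.

Hypothesis hR : d_representation R.

Lemma relative_section_point J x B : set0 \in relative_section J [set x] B ->
  relative_section J [set x] B = [set set0; [set x]].
Proof.
move=> /relative_sectionP[_ /(_ x (set11 x))[j jJ]]; rewrite set0U => domB.
apply/setP => G; rewrite in_set2 orbC -subset1.
apply/relative_sectionP/idP => [[//]|Gx]; split=> // v /set1P ->.
have [refl _ _ _] := hR j; exists j; rewrite // dominatesU domB andbT dominatesE.
by apply: subset_trans Gx _; rewrite sub1set inE.
Qed.

Section SplitAtMaximum.
Variables (J : {set 'I_d}) (W B : {set V}) (j0 : 'I_d) (x : V).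
Hypotheses (j0J : j0 \in J) (xW : x \in W).
Hypotheses (xmax : forall v, v \in W -> R j0 v x) (xB : dominates (R j0) x B).

Lemma dominates_max G : G \subset W -> dominates (R j0) x (G :|: B).
Proof.
move=> GW; rewrite dominatesU xB andbT dominatesE.
by apply/subsetP => f /(subsetP GW)/xmax; rewrite inE.
Qed.

Lemma mem_relative_section_notin G : x \notin G ->
  (G \in relative_section J W B) = (G \in relative_section J (W :\ x) B).
Proof.
move=> xG; apply/relative_sectionP/relative_sectionP => -[GW domG]; split.
- by rewrite subsetD1 GW.
- by move=> v /setD1P[_ /domG].
- exact: subset_trans GW (subD1set _ _).
move=> v vW; have [->|vx] := eqVneq v x.
  by exists j0; last apply: dominates_max (subset_trans GW (subD1set _ _)).
by apply: domG; rewrite in_setD1 vx.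
Qed.

Lemma mem_relative_section_in G : x \in G ->
  (G \in relative_section J W B) =
  (G :\ x \in relative_section (J :\ j0) (W :\ x) (x |: B)).
Proof.
move=> xG; have GB : G :\ x :|: (x |: B) = G :|: B.
  by rewrite setUA [_ :|: [set x]]setUC setD1K.
have GW : (G :\ x \subset W :\ x) = (G \subset W).
  by rewrite subsetD1 setD11 andbT -{2}(setD1K xG) subUset sub1set xW.
apply/relative_sectionP/relative_sectionP; rewrite GW => -[GW' domG].
  split=> // v /setD1P[vx vW]; have [j jJ domj] := domG v vW.
  exists j; last by rewrite GB.
  rewrite in_setD1 jJ andbT; apply: contra_neq vx => ej; rewrite ej in domj.
  have [_ anti _ _] := hR j0; apply: anti; rewrite xmax //=.
  by move: domj; rewrite dominatesU => /andP[/forall_inP/(_ x xG)].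
split=> // v vW; have [->|vx] := eqVneq v x.
  by exists j0; last apply: dominates_max.
have /domG[j] : v \in W :\ x by rewrite in_setD1 vx.
by rewrite in_setD1 GB => /andP[_ jJ]; exists j.
Qed.

Lemma relative_section_attach_cone :
  relative_section J W B =
  attach_cone x (relative_section (J :\ j0) (W :\ x) (x |: B))
                (relative_section J (W :\ x) B).
Proof.
apply/setP => G; rewrite in_attach_cone.
by case: ifPn;
  [apply: mem_relative_section_in | apply: mem_relative_section_notin].
Qed.
End SplitAtMaximum.

Lemma collapsible_relative_section J W B : W != set0 ->
  set0 \in relative_section J W B -> collapsible (relative_section J W B).
Proof.
have [n] := ubnP (#|J| + #|W|); elim: n J W B => // n IH J W B /ltnSE-hn W0 S0.
have [j0 j0J] : exists j0, j0 \in J.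
  have [v vW] := set0Pn _ W0.
  by case/relative_sectionP: S0 => _ /(_ v vW)[j]; exists j.
have Jj0_lt : #|J :\ j0| < #|J| by rewrite (cardsD1 j0 J) j0J.
have [x xW xmax] := exists_linear_max (hR j0) W0.
have [xB|xNB] := boolP (dominates (R j0) x B); last first.
  have [_ _ trans _] := hR j0.
  rewrite (@relative_section_drop _ _ _ j0) in S0 *; last first.
    move=> v vW; apply: contra xNB; rewrite !dominatesE => /subset_trans; apply.
    by apply/subsetP => f; rewrite !inE => /trans; apply; apply: xmax.
  by apply: IH => //; apply: leq_trans hn; rewrite ltn_add2r.
have [Wx0|Wx0] := eqVneq (W :\ x) set0.
  have Wx : W = [set x] by rewrite -(setD1K xW) Wx0 setU0.
  rewrite Wx in S0 *; exists x.
  by rewrite relative_section_point //; apply: collapses_refl.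
have Wx_lt : #|W :\ x| < #|W| by rewrite (cardsD1 x W) xW.
rewrite (relative_section_attach_cone j0J xW xmax xB) in S0 *.
rewrite in_attach_cone inE in S0.
have x_cover J' B' : x \notin cover (relative_section J' (W :\ x) B').
  by apply: contra (subsetP (cover_relative_section _ _ _) x) _; rewrite setD11.
apply: collapsible_attach_cone; rewrite ?x_cover //.
  by apply: IH => //; apply: leq_trans hn; rewrite ltn_add2l.
have [->|L0] := eqVneq (relative_section (J :\ j0) (W :\ x) (x |: B)) set0.
  by left.
right; apply: IH => //; last by apply: contraR L0 => /relative_section_eq0 ->.
exact: leq_trans (leq_add Jj0_lt (ltnW Wx_lt)) hn.
Qed.
End RelativeSection.

Theorem theorem2 (V : finType) (d : nat) (R : 'I_d -> rel V) :
  0 < #|V| -> 1 <= d -> d_representation R ->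
  collapsible (supremum_section R).
Proof.
move=> V0 d0 hR; rewrite supremum_section_relative.
apply: collapsible_relative_section => //; first by rewrite -card_gt0 cardsT.
apply/relative_sectionP; split=> [|v _]; first exact: sub0set.
by exists (Ordinal d0); rewrite ?inE // setU0 dominatesE sub0set.
Qed.
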